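(* Let $f:\{0,1\}^n\to\{-1,1\}$ and $J\subseteq[n]$. Then $$\mathrm{SymInf}_f(J)=\tfrac12\sum_{S\subseteq[n]}\mathop{\mathbf{Var}}_{\pi\in\mathcal{S}_J}\big[\widehat f(\pi S)\big],$$ where $\pi$ is uniform in $\mathcal{S}_J$ and $\pi S=\{\pi(i):i\in S\}$.
   Context: $\mathcal{S}_J$ is the set of permutations of $[n]$ fixing every element outside $J$. For $x\in\{0,1\}^n$ and a permutation $\pi$, $\pi x$ is the vector whose $\pi(i)$-th coordinate is $x_i$. The symmetric influence of $J$ is $\mathrm{SymInf}_f(J)=\Pr_{x,\pi}[f(x)\ne f(\pi x)]$ with $x$ uniform in $\{0,1\}^n$ and $\pi$ uniform in $\mathcal{S}_J$. For $S\subseteq[n]$, $\chi_S(x)=(-1)^{\sum_{i\in S}x_i}$ and $\widehat f(S)=\mathbf{E}_x[f(x)\chi_S(x)]$ is the Fourier coefficient. *)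

From mathcomp Require Import all_boot all_order all_algebra all_fingroup.
Set Implicit Arguments. Unset Strict Implicit. Unset Printing Implicit Defensive.
Import Order.TTheory GRing.Theory Num.Theory.
Local Open Scope ring_scope.

Definition cube (n : nat) := {ffun 'I_n -> bool}.

Definition SJ (n : nat) (J : {set 'I_n}) : {set {perm 'I_n}} :=
  [set s : {perm 'I_n} | [forall i, (i \notin J) ==> (s i == i)]].

(* pi x : the vector whose pi(i)-th coordinate is x_i. *)
Definition permx (n : nat) (pi : {perm 'I_n}) (x : cube n) : cube n :=
  [ffun j => x ((pi^-1)%g j)].

Definition SymInf (R : realFieldType) (n : nat) (f : cube n -> R) (J : {set 'I_n}) : R :=
  (\sum_(x : cube n) \sum_(pi in SJ J) ((f x != f (permx pi x)) : nat)%:R)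
  / ((2 ^ n)%:R * #|SJ J|%:R).

Definition chi (R : realFieldType) (n : nat) (S : {set 'I_n}) (x : cube n) : R :=
  (-1) ^+ (\sum_(i in S) (x i : nat))%N.

Definition fhat (R : realFieldType) (n : nat) (f : cube n -> R) (S : {set 'I_n}) : R :=
  (\sum_(x : cube n) f x * chi R S x) / (2 ^ n)%:R.

Definition Epi (R : realFieldType) (n : nat) (A : {set {perm 'I_n}}) (g : {perm 'I_n} -> R) : R :=
  (\sum_(pi in A) g pi) / #|A|%:R.

Definition Varpi (R : realFieldType) (n : nat) (A : {set {perm 'I_n}}) (g : {perm 'I_n} -> R) : R :=
  Epi A (fun pi => (g pi - Epi A g) ^+ 2).

From mathcomp Require Import all_boot all_order all_algebra all_fingroup ring lra.
Import Order.TTheory GRing.Theory Num.Theory.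
Local Open Scope ring_scope.
Set Implicit Arguments. Unset Strict Implicit. Unset Printing Implicit Defensive.

(* Both sides are averages over S_J of the correlations <f, f o pi> = E_x [f x * f (pi x)].
   For a +-1-valued f, f x <> f (pi x) has indicator (1 - f x * f (pi x)) / 2, hence
   SymInf_f(J) = (1 - E_pi <f, f o pi>) / 2.  On the Fourier side hat f(pi S) is the
   coefficient of f o pi at S, so by Plancherel sum_S hat f(pi S) hat f(sigma S) =
   <f o pi, f o sigma> = <f, f o pi^-1 sigma>.  Summing the variances over S therefore
   gives <f, f> - E_(pi, sigma) <f, f o pi^-1 sigma> = 1 - E_pi <f, f o pi>, using that
   S_J is a group. *)

Lemma sum_sets_flip_eq0 (R : numDomainType) (T : finType) (i : T) (h : {set T} -> R) :
  (forall S : {set T}, i \notin S -> h (i |: S) = - h S) -> \sum_(S : {set T}) h S = 0.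
Proof.
move=> hflip; pose t (S : {set T}) := if i \in S then S :\ i else i |: S.
have tK : involutive t.
  move=> S; rewrite /t; case: (boolP (i \in S)) => iS.
    by rewrite !inE eqxx /= setD1K.
  by rewrite !inE eqxx /= setU1K.
have ht (S : {set T}) : h (t S) = - h S.
  rewrite /t; case: ifPn => iS; last exact: hflip.
  by rewrite -{2}(setD1K iS) hflip ?opprK // !inE eqxx.
have : \sum_S h S = - \sum_S h S.
  rewrite {1}(reindex_inj (inv_inj tK)) /= -sumrN.
  by apply: eq_bigr => S _; rewrite ht.
by move/eqP; rewrite -addr_eq0 -mulr2n mulrn_eq0 /= => /eqP.
Qed.

Lemma card_cube n : #|cube n| = (2 ^ n)%N.
Proof. by rewrite card_ffun card_bool card_ord. Qed.

Section Characters.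
Variables (R : realFieldType) (n : nat).

Lemma chi_setU1 (S : {set 'I_n}) i (x : cube n) :
  i \notin S -> chi R (i |: S) x = (-1) ^+ (x i : nat) * chi R S x.
Proof. by move=> iS; rewrite /chi big_setU1 //= exprD. Qed.

Lemma chi_orth (x y : cube n) :
  \sum_(S : {set 'I_n}) chi R S x * chi R S y = if x == y then (2 ^ n)%:R else 0.
Proof.
case: eqP => [<-|/eqP nxy].
  under eq_bigr do rewrite -expr2 sqrr_sign.
  by rewrite sumr_const -cardsT -powersetT card_powerset cardsT card_ord.
have [i xyi] : exists i, x i != y i.
  apply/existsP; apply: contraNT nxy; rewrite negb_exists => /forallP xy.
  by apply/eqP/ffunP => i; apply/eqP; rewrite -[_ == _]negbK xy.
apply: (@sum_sets_flip_eq0 R 'I_n i) => S iS; rewrite !chi_setU1 // mulrACA.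
have -> : (-1) ^+ (x i : nat) * (-1) ^+ (y i : nat) = - 1 :> R.
  by move: xyi; case: (x i); case: (y i); rewrite //= ?expr1 ?expr0 ?mulr1 ?mul1r.
by rewrite mulN1r.
Qed.

Lemma chi_perm (pi : {perm 'I_n}) (S : {set 'I_n}) (x : cube n) :
  chi R (pi @: S) (permx pi x) = chi R S x.
Proof.
rewrite /chi big_imset /=; last by move=> a b _ _; apply: perm_inj.
by congr (_ ^+ _); apply: eq_bigr => i _; rewrite ffunE permK.
Qed.

End Characters.

Lemma permxM n (s t : {perm 'I_n}) (x : cube n) :
  permx s (permx t x) = permx (t * s)%g x.
Proof. by apply/ffunP => j; rewrite !ffunE invMg permM. Qed.

Lemma permx1 n (x : cube n) : permx 1%g x = x.
Proof. by apply/ffunP => j; rewrite !ffunE invg1 perm1. Qed.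

Lemma permxK n (s : {perm 'I_n}) : cancel (permx s) (permx s^-1%g).
Proof. by move=> x; rewrite permxM mulgV permx1. Qed.

Section Fourier.
Variables (R : realFieldType) (n : nat).

Definition cube_inner (g h : cube n -> R) : R := (\sum_x g x * h x) / (2 ^ n)%:R.

Lemma fhat_perm (f : cube n -> R) (pi : {perm 'I_n}) (S : {set 'I_n}) :
  fhat f (pi @: S) = fhat (f \o permx pi) S.
Proof.
rewrite /fhat (reindex_inj (can_inj (@permxK n pi))) /=.
by congr (_ / _); apply: eq_bigr => y _; rewrite chi_perm.
Qed.

Lemma fourier_inversion (h : cube n -> R) (x : cube n) :
  \sum_(S : {set 'I_n}) fhat h S * chi R S x = h x.
Proof.
have N0 : (2 ^ n)%:R != 0 :> R by rewrite pnatr_eq0 expn_eq0.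
rewrite /fhat; under eq_bigr do rewrite mulrAC mulr_suml.
rewrite -mulr_suml exchange_big /=.
under eq_bigr do under eq_bigr do rewrite -mulrA.
under eq_bigr do rewrite -mulr_sumr chi_orth.
rewrite (bigD1 x) //= big1 ?addr0 ?eqxx ?mulfK // => y yx.
by rewrite (negbTE yx) mulr0.
Qed.

Lemma plancherel (g h : cube n -> R) :
  \sum_(S : {set 'I_n}) fhat g S * fhat h S = cube_inner g h.
Proof.
rewrite /cube_inner; under eq_bigr do rewrite /fhat mulrAC mulr_suml.
rewrite -mulr_suml exchange_big /=; congr (_ / _); apply: eq_bigr => x _.
by rewrite -(fourier_inversion h x) mulr_sumr; apply: eq_bigr => S _; rewrite mulrAC mulrA.
Qed.

Lemma cube_inner_permx (g h : cube n -> R) (s : {perm 'I_n}) :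
  cube_inner (g \o permx s) (h \o permx s) = cube_inner g h.
Proof.
rewrite /cube_inner (reindex_inj (can_inj (@permxK n s^-1%g))) /=.
by congr (_ / _); apply: eq_bigr => x _; rewrite permxM mulVg permx1.
Qed.

Lemma cube_inner_permx_shift (g h : cube n -> R) (s t : {perm 'I_n}) :
  cube_inner (g \o permx s) (h \o permx t) = cube_inner g (h \o permx (s^-1 * t)%g).
Proof.
rewrite /cube_inner (reindex_inj (can_inj (@permxK n s^-1%g))) /=.
by congr (_ / _); apply: eq_bigr => x _; rewrite !permxM mulVg permx1.
Qed.

Lemma cube_inner_sign (f : cube n -> R) :
  (forall x, f x = 1 \/ f x = -1) -> cube_inner f f = 1.
Proof.
move=> hf; have ff x : f x * f x = 1 by case: (hf x) => ->; rewrite ?mulrNN mulr1.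
rewrite /cube_inner; under eq_bigr do rewrite ff.
by rewrite sumr_const card_cube divff // pnatr_eq0 expn_eq0.
Qed.

Lemma disagreement_sign (g h : cube n -> R) :
  (forall x, g x = 1 \/ g x = -1) -> (forall x, h x = 1 \/ h x = -1) ->
  (\sum_x ((g x != h x) : nat)%:R) / (2 ^ n)%:R = (1 - cube_inner g h) / 2.
Proof.
move=> hg hh; have N0 : (2 ^ n)%:R != 0 :> R by rewrite pnatr_eq0 expn_eq0.
have ne1 : (1 : R) != -1 by apply/eqP => E; lra.
have ind x : ((g x != h x) : nat)%:R = (1 - g x * h x) / 2 :> R.
  by case: (hg x) (hh x) => -> [] ->; rewrite ?eqxx ?(negbTE ne1) 1?eq_sym ?(negbTE ne1) /=; field.
under eq_bigr do rewrite ind.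
rewrite /cube_inner -mulr_suml sumrB sumr_const card_cube; field.
by rewrite N0.
Qed.

End Fourier.

Section Averages.
Variables (R : realFieldType) (n : nat) (A : {set {perm 'I_n}}).

Lemma eq_Epi (F G : {perm 'I_n} -> R) : F =1 G -> Epi A F = Epi A G.
Proof. by move=> FG; rewrite /Epi; under eq_bigr do rewrite FG. Qed.

Lemma Epi_affine (a b : R) (F : {perm 'I_n} -> R) :
  #|A| != 0%N -> Epi A (fun s => a + b * F s) = a + b * Epi A F.
Proof.
move=> A0; have M0 : #|A|%:R != 0 :> R by rewrite pnatr_eq0.
rewrite /Epi big_split /= sumr_const -mulr_sumr -mulr_natr; field.
by rewrite M0.
Qed.

Lemma Epi_cst (c : R) : #|A| != 0%N -> Epi A (fun _ => c) = c.
Proof.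
move=> A0; rewrite /Epi sumr_const -mulr_natr; field.
by rewrite pnatr_eq0.
Qed.

Lemma sum_Epi (I : finType) (F : I -> {perm 'I_n} -> R) :
  \sum_i Epi A (F i) = Epi A (fun s => \sum_i F i s).
Proof. by rewrite /Epi -mulr_suml exchange_big. Qed.

Lemma Epi_sqr (g : {perm 'I_n} -> R) :
  Epi A g ^+ 2 = Epi A (fun s => Epi A (fun t => g s * g t)).
Proof.
rewrite /Epi expr2 mulrAC mulr_suml; congr (_ / _); apply: eq_bigr => s _.
by rewrite mulrA mulr_sumr.
Qed.

Lemma Varpi_Epi (g : {perm 'I_n} -> R) :
  #|A| != 0%N -> Varpi A g = Epi A (fun s => g s ^+ 2) - Epi A g ^+ 2.
Proof.
move=> A0; have M0 : #|A|%:R != 0 :> R by rewrite pnatr_eq0.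
rewrite /Varpi /Epi; set E := (\sum_(s in A) g s) / #|A|%:R.
under eq_bigr do rewrite sqrrB.
rewrite !big_split /= sumrN sumr_const sumrMnl -mulr_suml /E; field.
by rewrite M0.
Qed.

End Averages.

Lemma SJ_astab n (J : {set 'I_n}) : SJ J = 'C(~: J | 'P)%g.
Proof.
apply/setP => s; rewrite inE; apply/forallP/astabP => [H i|H i].
  by rewrite inE => iJ; apply/eqP/(implyP (H i)).
by apply/implyP => iJ; apply/eqP/H; rewrite inE.
Qed.

Lemma Epi_mulKg (R : realFieldType) n (G : {group {perm 'I_n}}) (F : {perm 'I_n} -> R) s :
  s \in G -> Epi G (fun t => F (s^-1 * t)%g) = Epi G F.
Proof.
move=> sG; rewrite /Epi (reindex_inj (mulgI s)) /=; congr (_ / _).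
by apply: eq_big => [t|t _]; rewrite ?groupMl ?mulKg.
Qed.

Lemma Epi_group_shift (R : realFieldType) n (G : {group {perm 'I_n}}) (F : {perm 'I_n} -> R) :
  Epi G (fun s => Epi G (fun t => F (s^-1 * t)%g)) = Epi G F.
Proof.
have G0 : #|G| != 0%N by rewrite -lt0n cardG_gt0.
rewrite {1}/Epi; under eq_bigr => s sG do rewrite (Epi_mulKg F sG).
exact: Epi_cst.
Qed.

Lemma SymInf_Epi (R : realFieldType) n (f : cube n -> R) (J : {set 'I_n}) :
  SymInf f J =
  Epi (SJ J) (fun pi => (\sum_x ((f x != f (permx pi x)) : nat)%:R) / (2 ^ n)%:R).
Proof. by rewrite /SymInf /Epi exchange_big -mulr_suml invfM mulrA. Qed.

Lemma sum_Varpi_fhat (R : realFieldType) n (f : cube n -> R) (A : {set {perm 'I_n}}) :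
  #|A| != 0%N ->
  \sum_(S : {set 'I_n}) Varpi A (fun pi => fhat f (pi @: S)) =
  Epi A (fun s => cube_inner (f \o permx s) (f \o permx s))
  - Epi A (fun s => Epi A (fun t => cube_inner (f \o permx s) (f \o permx t))).
Proof.
move=> A0; under eq_bigr do rewrite Varpi_Epi // Epi_sqr.
rewrite sumrB !sum_Epi; congr (_ - _); apply: eq_Epi => s.
  by rewrite -plancherel; apply: eq_bigr => S _; rewrite expr2 fhat_perm.
rewrite sum_Epi; apply: eq_Epi => t.
by rewrite -plancherel; apply: eq_bigr => S _; rewrite !fhat_perm.
Qed.

Lemma SymInf_sign (R : realFieldType) n (f : cube n -> R) (J : {set 'I_n}) :
  (forall x, f x = 1 \/ f x = -1) ->
  SymInf f J = (1 - Epi (SJ J) (fun t => cube_inner f (f \o permx t))) / 2.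
Proof.
move=> hf; have J0 : #|SJ J| != 0%N by rewrite SJ_astab -lt0n cardG_gt0.
rewrite SymInf_Epi.
transitivity (Epi (SJ J) (fun t => 2^-1 + (- 2^-1) * cube_inner f (f \o permx t))).
  apply: eq_Epi => t; rewrite (disagreement_sign hf (fun x => hf (permx t x))).
  by field.
by rewrite Epi_affine //; field.
Qed.

Lemma sum_Varpi_fhat_sign (R : realFieldType) n (f : cube n -> R) (G : {group {perm 'I_n}}) :
  (forall x, f x = 1 \/ f x = -1) ->
  \sum_(S : {set 'I_n}) Varpi G (fun pi => fhat f (pi @: S)) =
  1 - Epi G (fun t => cube_inner f (f \o permx t)).
Proof.
move=> hf; have G0 : #|G| != 0%N by rewrite -lt0n cardG_gt0.
rewrite sum_Varpi_fhat // -(Epi_group_shift G (fun t => cube_inner f (f \o permx t))).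
congr (_ - _); last by apply: eq_Epi => s; apply: eq_Epi => t; rewrite cube_inner_permx_shift.
rewrite -[RHS](Epi_cst 1 G0); apply: eq_Epi => s.
by rewrite cube_inner_permx cube_inner_sign.
Qed.

Theorem proposition2 (R : realFieldType) (n : nat) (f : cube n -> R)
  (hf : forall x, f x = 1 \/ f x = -1) (J : {set 'I_n}) :
  SymInf f J =
  2^-1 * \sum_(S : {set 'I_n}) Varpi (SJ J) (fun pi => fhat f (pi @: S)).
Proof.
by rewrite SymInf_sign // SJ_astab sum_Varpi_fhat_sign // mulrC.
Qed.
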